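(* Let $G$ be the inverse limit of an inverse system $(G_n)_{n\geq 0}$ of finite groups with surjective homomorphisms $\rho_n : G_{n+1} \to G_n$, where each $G_n$ has a specified normal subgroup $A_n$. Write $P_n = \rho_n(A_{n+1})$ and $B_{n+1} = \ker \rho_n$. Suppose that for all but finitely many $n$, $(A_n,B_n)$ is a critical pair in $G_n$ and $P_n C_{G_n}(P_n) \leq B_n$. Then $G$ is just infinite and not virtually pronilpotent. Suppose in addition that the following condition $( * )$ holds: for infinitely many $n$, whenever $U$ is a subgroup of $G_n$ whose distinct $G_n$-conjugates pairwise centralise each other and together generate a subgroup of $G_n$ containing $A_n$, then $U \unlhd G_n$. Then $G$ is hereditarily just infinite.
   Context: All groups are profinite, homomorphisms continuous, subgroups closed. A profinite group is \emph{just infinite} if it is infinite and every non-trivial closed normal subgroup has finite index; \emph{hereditarily just infinite} if moreover every open subgroup is just infinite. ''Pronilpotent'' means an inverse limit of finite nilpotent groups. For normal subgroups $B < A$ of $G$, $(A,B)$ is a \emph{critical pair} in $G$ if $B$ contains every normal subgroup of $G$ properly contained in $A$. $C_{G_n}(P_n)$ denotes the centraliser of $P_n$ in $G_n$. *)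

(* Profinite group = inverse limit of finite groups, modelled
   concretely as compatible threads of elements. *)
From HB Require Import structures.
From mathcomp Require Import all_boot all_fingroup all_solvable.
Set Implicit Arguments. Unset Strict Implicit. Unset Printing Implicit Defensive.

Local Open Scope group_scope.

(* An inverse system (G_n)_{n>=0} of finite groups with surjective
   homomorphisms rho_n : G_{n+1} -> G_n.  G_n is the full group [set: grp n]. *)
Record invsys := InvSys {
  grp : nat -> finGroupType;
  rho : forall n, {morphism [set: grp n.+1] >-> grp n};
  rho_onto : forall n, rho n @* [set: grp n.+1] = [set: grp n] }.

Definition critical_pair (gT : finGroupType) (G A B : {set gT}) : Prop :=
  [/\ A <| G, B <| G, B \proper A &
      forall N : {group gT}, N <| G -> N \proper A -> N \subset B].

Definition Pn (S : invsys) (A : forall n, {set grp S n}) (n : nat) : {set grp S n} :=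
  rho S n @* A n.+1.

Section Lim.
Variable S : invsys.

Definition elt := forall n, grp S n.
Definition in_lim (x : elt) : Prop := forall n, rho S n (x n.+1) = x n.
Definition e1 : elt := fun n => 1.
Definition emul (x y : elt) : elt := fun n => x n * y n.
Definition einv (x : elt) : elt := fun n => (x n)^-1.
Definition eeq (x y : elt) : Prop := forall n, x n = y n.
Definition epred := elt -> Prop.

Definition Glim : epred := in_lim.

Definition esub (H K : epred) : Prop := forall x, H x -> K x.

Definition subgrp (H : epred) : Prop :=
  [/\ esub H in_lim, H e1,
      (forall x y, H x -> H y -> H (emul x y)) &
      (forall x, H x -> H (einv x))].

Definition eclosed (H : epred) : Prop :=
  forall x, in_lim x -> (forall n, exists y, H y /\ y n = x n) -> H x.

Definition enormalizes (K H : epred) : Prop :=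
  forall g h, K g -> H h -> H (emul (einv g) (emul h g)).

Definition efinite (K : epred) : Prop :=
  exists m (f : 'I_m -> elt), forall g, K g -> exists i, eeq g (f i).

Definition finite_index (H K : epred) : Prop :=
  exists m (f : 'I_m -> elt), (forall i, K (f i)) /\
    forall g, K g -> exists i, H (emul (einv (f i)) g).

Definition nontrivial (N : epred) : Prop := exists h, N h /\ ~ eeq h e1.

(* just infinite (K is meant to be a closed subgroup of G, hence profinite) *)
Definition just_infinite (K : epred) : Prop :=
  ~ efinite K /\
  forall N, subgrp N -> eclosed N -> esub N K -> enormalizes K N ->
    nontrivial N -> finite_index N K.

(* H is an open subgroup of K: a subgroup containing a basic neighbourhood
   {x in K | x_n = 1} of the identity of K *)
Definition open_subgrp (H K : epred) : Prop :=
  [/\ subgrp H, esub H K & exists n, forall x, K x -> x n = 1 -> H x].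

Definition hereditarily_just_infinite (K : epred) : Prop :=
  just_infinite K /\ forall H, open_subgrp H K -> just_infinite H.

(* A closed subgroup H is the inverse limit of its images in the G_n;
   it is pronilpotent when all these finite images are nilpotent. *)
Definition pronilpotent (H : epred) : Prop :=
  forall n, exists P : {group grp S n},
    (forall g, g \in P <-> exists x, H x /\ x n = g) /\ nilpotent P.

Definition virtually_pronilpotent (K : epred) : Prop :=
  exists H, open_subgrp H K /\ pronilpotent H.

End Lim.
Arguments Glim S : clear implicits.

(* For large n the hypotheses force every normal subgroup X of G_{n+2} either
   to contain A_{n+2} or to vanish in G_n: by criticality X meets A_{n+2}
   inside B_{n+2}, so the image of X in G_{n+1} centralises P_{n+1} and lies in
   B_{n+1}.  The images of a nontrivial closed normal subgroup of G therefore
   eventually contain the A_n, hence the kernels B_n, hence an open subgroup.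
   Open subgroups are infinite because the B_n are nontrivial, and an open
   pronilpotent subgroup would give nilpotent normal subgroups of G_n
   containing A_n, which would have to centralise the minimal normal
   subgroup P_n.
   For the hereditary statement, let N be a nontrivial closed normal subgroup
   of an open subgroup H >= ker pi_k.  Among the intersections of conjugates
   of N /\ ker pi_k by sets T of level-k representatives, take a nontrivial one
   with |T| maximal: two distinct conjugates of it commute, since their
   commutator lies in a larger intersection.  Its images in G_n then satisfy
   the hypotheses of condition star, so it is normal in G and contains an
   open subgroup, and so does N. *)

From Stdlib Require Import FunctionalExtensionality ClassicalEpsilon Classical.
From mathcomp Require Import all_boot all_fingroup all_solvable.
Set Implicit Arguments. Unset Strict Implicit. Unset Printing Implicit Defensive.
Local Open Scope group_scope.

Section InverseLimit.
Context {S : invsys}.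
Local Notation grp := (grp S).
Local Notation rho := (rho S).
Local Notation elt := (elt S).
Local Notation in_lim := (@in_lim S).
Local Notation e1 := (@e1 S).

Lemma elt_ext (x y : elt) : eeq x y -> x = y.
Proof. by move=> exy; apply: functional_extensionality_dep. Qed.

Lemma rhoM n (a b : grp n.+1) : rho n (a * b) = rho n a * rho n b.
Proof. by rewrite morphM ?inE. Qed.

Lemma rhoV n (a : grp n.+1) : rho n a^-1 = (rho n a)^-1.
Proof. by rewrite morphV ?inE. Qed.

Lemma in_lim1 : in_lim e1.
Proof. by move=> n; rewrite /e1 morph1. Qed.

Lemma in_limM x y : in_lim x -> in_lim y -> in_lim (emul x y).
Proof. by move=> limx limy n; rewrite /emul rhoM limx limy. Qed.

Lemma in_limV x : in_lim x -> in_lim (einv x).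
Proof. by move=> limx n; rewrite /einv rhoV limx. Qed.

Lemma in_lim_eq_le x y j k :
  in_lim x -> in_lim y -> x j = y j -> k <= j -> x k = y k.
Proof.
move=> limx limy + le_kj; rewrite -(subnK le_kj); elim: (j - k) => //= d IH xy.
by apply: IH; rewrite -limx -limy xy.
Qed.

Lemma in_lim_eq1_le x j k : in_lim x -> x j = 1 -> k <= j -> x k = 1.
Proof. exact: (@in_lim_eq_le x e1 j k ^~ in_lim1). Qed.

Lemma in_lim_eventually_neq1 x :
  in_lim x -> ~ eeq x e1 -> exists j, forall n, j <= n -> x n != 1.
Proof.
move=> limx x_neq1; apply: NNPP => no_j; apply: x_neq1 => i.
apply: NNPP => xi_neq1; apply: no_j; exists i => n le_in; apply/eqP => xn1.
exact/xi_neq1/(in_lim_eq1_le limx xn1 le_in).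
Qed.

Definition sect n (t : grp n) : grp n.+1 := odflt 1 [pick u | rho n u == t].

Lemma sectK n (t : grp n) : rho n (sect t) = t.
Proof.
rewrite /sect; case: pickP => [u /eqP //|].
have : t \in rho n @* [set: grp n.+1] by rewrite rho_onto inE.
by case/morphimP=> u _ _ -> /(_ u); rewrite eqxx.
Qed.

Fixpoint lift_up n (t : grp n) d : grp (d + n) :=
  match d return grp (d + n) with d'.+1 => sect (lift_up t d') | 0 => t end.

Fixpoint proj_down k d : grp (d + k) -> grp k :=
  match d return grp (d + k) -> grp k with
  | d'.+1 => fun x => @proj_down k d' (rho (d' + k) x) | 0 => id end.

Definition gcast a b (e : a = b) (x : grp a) : grp b := eq_rect a grp x b e.

Lemma gcast_id a (e : a = a) x : gcast e x = x.
Proof. by rewrite (eq_irrelevance e erefl). Qed.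

Lemma gcast_comp a b c (eab : a = b) (ebc : b = c) x :
  gcast ebc (gcast eab x) = gcast (etrans eab ebc) x.
Proof. by case: b / eab ebc => ebc; case: c / ebc. Qed.

Lemma gcast_rho a b (e : a.+1 = b.+1) (e' : a = b) x :
  rho b (gcast e x) = gcast e' (rho a x).
Proof. by case: b / e' e => e; rewrite !gcast_id. Qed.

Lemma rho_proj_down k d (x : grp (d + k.+1)) :
  rho k (proj_down x) = proj_down (d := d.+1) (gcast (addnS d k) x).
Proof.
elim: d x => [|d IH] x /=; first by rewrite gcast_id.
by rewrite IH /= (gcast_rho (addnS d.+1 k) (addnS d k)).
Qed.

Lemma proj_down_lift_up n d (t : grp n) : proj_down (lift_up t d) = t.
Proof. by elim: d => //= d IH; rewrite sectK. Qed.

(* Climb from level n to level k + n along sections of the rho's, then come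
   down n steps to level k. *)
Definition thread n (t : grp n) : elt :=
  fun k => proj_down (d := n) (gcast (addnC k n) (lift_up t k)).

Lemma thread_in_lim n (t : grp n) : in_lim (thread t).
Proof.
move=> k; rewrite /thread rho_proj_down /=.
by rewrite gcast_comp (gcast_rho _ (addnC k n)) sectK.
Qed.

Lemma thread_at n (t : grp n) : thread t n = t.
Proof. by rewrite /thread gcast_id proj_down_lift_up. Qed.

Lemma thread_exists n (t : grp n) : exists x, in_lim x /\ x n = t.
Proof. by exists (thread t); split; [exact: thread_in_lim | exact: thread_at]. Qed.

Definition classic_bool (P : Prop) : bool :=
  if excluded_middle_informative P then true else false.

Lemma classic_boolP P : reflect P (classic_bool P).
Proof. by rewrite /classic_bool; case: excluded_middle_informative; constructor. Qed.

Definition level (X : epred S) n : {set grp n} :=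
  [set g | classic_bool (exists x, X x /\ x n = g)].

Lemma levelP X n g : reflect (exists x, X x /\ x n = g) (g \in level X n).
Proof. by rewrite inE; apply: classic_boolP. Qed.

Lemma level_group_set X n : subgrp X -> group_set (level X n).
Proof.
case=> _ X1 XM _; apply/group_setP; split; first by apply/levelP; exists e1.
move=> _ _ /levelP[x [Xx <-]] /levelP[y [Xy <-]].
by apply/levelP; exists (emul x y); split; first exact: XM.
Qed.

Canonical levelG X n (subX : subgrp X) := Group (level_group_set n subX).

Lemma morphim_rho_level X n : esub X in_lim -> rho n @* level X n.+1 = level X n.
Proof.
move=> limX; apply/setP => g; apply/idP/idP.
  by case/morphimP=> _ _ /levelP[x [Xx <-]] ->; apply/levelP; exists x; rewrite limX.
case/levelP=> x [Xx <-]; apply/morphimP; exists (x n.+1); rewrite ?in_setT ?limX //.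
by apply/levelP; exists x.
Qed.

Lemma level_normal X n :
  esub X in_lim -> enormalizes in_lim X -> level X n <| [set: grp n].
Proof.
move=> limX normX; rewrite /normal subsetT; apply/subsetP => c _.
rewrite inE; apply/subsetP => t; rewrite mem_conjg => /levelP[y [Xy yt]].
have [g [limg gc]] := thread_exists c; apply/levelP.
exists (emul (einv g) (emul y g)); split; first exact: normX.
by rewrite /emul /einv gc yt /conjg invgK !mulgA mulgKV mulVg mul1g.
Qed.

Definition econj (g y : elt) : elt := emul g (emul y (einv g)).

Lemma econj_at g y n : econj g y n = g n * y n * (g n)^-1.
Proof. by rewrite /econj /emul /einv mulgA. Qed.

Lemma in_lim_econj g y : in_lim g -> in_lim y -> in_lim (econj g y).
Proof. by move=> limg limy; apply: in_limM => //; apply: in_limM => //; apply: in_limV. Qed.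

Lemma econjVE g y : econj (einv g) y = emul (einv g) (emul y g).
Proof. by apply: elt_ext => i; rewrite /econj /emul /einv invgK. Qed.

Lemma econj_mul g x y : econj g (emul x y) = emul (econj g x) (econj g y).
Proof. by apply: elt_ext => i; rewrite /econj /emul /einv !mulgA mulgKV. Qed.

Lemma econj_inv g x : econj g (einv x) = einv (econj g x).
Proof. by apply: elt_ext => i; rewrite /econj /emul /einv !invMg invgK !mulgA. Qed.

Lemma econj_comp g h y : econj g (econj h y) = econj (emul g h) y.
Proof. by apply: elt_ext => i; rewrite /econj /emul /einv invMg !mulgA. Qed.

Lemma econj1 y : econj e1 y = y.
Proof. by apply: elt_ext => i; rewrite /econj /emul /einv /e1 invg1 mul1g mulg1. Qed.

Lemma econjg1 g : econj g e1 = e1.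
Proof. by apply: elt_ext => i; rewrite /econj /emul /einv /e1 mul1g mulgV. Qed.

Lemma econjKV g y : econj g (econj (einv g) y) = y.
Proof.
by apply: elt_ext => i; rewrite /econj /emul /einv invgK !mulgA mulgV mul1g mulgK.
Qed.

Lemma einvK (x : elt) : einv (einv x) = x.
Proof. by apply: elt_ext => i; rewrite /einv invgK. Qed.

Definition ecomm (x y : elt) : elt := fun n => [~ x n, y n].

Lemma ecommE x y : ecomm x y = emul (einv x) (econj (einv y) x).
Proof.
by apply: elt_ext => i; rewrite /ecomm /commg /conjg /econj /emul /einv invgK !mulgA.
Qed.

Lemma ecommEr x y : ecomm x y = emul (econj (einv x) (einv y)) y.
Proof.
by apply: elt_ext => i; rewrite /ecomm /commg /conjg /econj /emul /einv invgK !mulgA.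
Qed.

Lemma normalized_of_level_normal X :
  subgrp X -> eclosed X ->
  (forall m, exists2 n, m <= n & level X n <| [set: grp n]) ->
  enormalizes in_lim X.
Proof.
case=> limX _ _ _ closedX levX g y limg Xy.
have limgy : in_lim (emul (einv g) (emul y g)).
  by rewrite -econjVE; apply: in_lim_econj; [apply: in_limV | apply: limX].
apply: closedX => // m; have [n le_mn /normalP[_ normXn]] := levX m.
have : y n ^ g n \in level X n.
  by rewrite -(normXn (g n)) ?in_setT // memJ_conjg; apply/levelP; exists y.
case/levelP=> z [Xz zn]; exists z; split=> //.
apply: (in_lim_eq_le (limX _ Xz) limgy _ le_mn).
by rewrite zn /emul /einv /conjg mulgA.
Qed.

Definition ker_proj k : epred S := fun x => in_lim x /\ x k = 1.

Lemma ker_proj_subgrp k : subgrp (ker_proj k).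
Proof.
split; first by move=> x [].
- by split; [exact: in_lim1 |].
- by move=> x y [limx x1] [limy y1]; split; [exact: in_limM | rewrite /emul x1 y1 mulg1].
- by move=> x [limx x1]; split; [exact: in_limV | rewrite /einv x1 invg1].
Qed.

Lemma ker_proj_normal k : enormalizes in_lim (ker_proj k).
Proof.
move=> g h limg [limh h1]; rewrite -econjVE; split.
  by apply: in_lim_econj => //; apply: in_limV.
by rewrite econj_at h1 mulg1 mulgV.
Qed.

Lemma finite_index_of_ker_proj (X K : epred S) m : subgrp K ->
  (forall x, K x -> x m = 1 -> X x) -> finite_index X K.
Proof.
case=> _ K1 KM KV kerX.
have rep t : {x | K x /\ ((exists y, K y /\ y m = t) -> x m = t)}.
  case: (excluded_middle_informative (exists y, K y /\ y m = t)) => [lift_t|no_lift].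
    by have [x [Kx xt]] := constructive_indefinite_description _ lift_t; exists x.
  by exists e1; split=> // lift_t; case: no_lift.
exists #|grp m|, (fun i => sval (rep (enum_val i))).
split=> [i | g Kg]; first by case: (rep _) => x [].
exists (enum_rank (g m)); rewrite enum_rankK; case: (rep _) => x /= [Kx xm].
apply: kerX; first by apply: KM => //; apply: KV.
by rewrite /emul /einv xm ?mulVg //; exists g.
Qed.

Lemma ker_rho_sub_level V k n : (forall x, in_lim x -> x k = 1 -> V x) -> k <= n ->
  'ker (rho n) \subset level V n.+1.
Proof.
move=> kerV le_kn; apply/subsetP => t /(kerP _ (in_setT t)) t1.
apply/levelP; exists (thread t); split; last exact: thread_at.
apply: kerV; first exact: thread_in_lim.
by apply: (in_lim_eq1_le (thread_in_lim t) _ le_kn); rewrite -thread_in_lim thread_at.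
Qed.

Lemma closed_contains_ker_proj X m : subgrp X -> eclosed X ->
  (forall n, m <= n -> 'ker (rho n) \subset level X n.+1) ->
  forall x, in_lim x -> x m = 1 -> X x.
Proof.
move=> subX closedX kerX x limx xm1; have limX : esub X in_lim by case: subX.
suff Xx d : x (d + m) \in level X (d + m).
  apply: closedX => // n; have /levelP[y [Xy yx]] := Xx n.
  by exists y; split=> //; apply: (in_lim_eq_le (limX _ Xy) limx yx (leq_addr m n)).
elim: d => [|d IH]; first by rewrite xm1 group1.
move: IH; rewrite -(morphim_rho_level _ limX) => /morphimP[u _ Xu xu].
have xu_ker : x (d.+1 + m) * u^-1 \in 'ker (rho (d + m)).
  by apply/(kerP _ (in_setT _)); rewrite rhoM rhoV -xu limx mulgV.
rewrite -(mulgKV u (x _)) groupM //.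
exact: subsetP (kerX _ (leq_addl d m)) _ xu_ker.
Qed.

Lemma level_card_lt V n (subV : subgrp V) :
  'ker (rho n) \subset level V n.+1 -> 'ker (rho n) != 1 ->
  #|level V n| < #|level V n.+1|.
Proof.
move=> kerV ker_neq1; have limV : esub V in_lim by case: subV.
have card_Vn : #|level V n| = #|levelG n.+1 subV : 'ker (rho n)|.
  by rewrite -(morphim_rho_level _ limV) card_morphim setTI.
have := LagrangeI (levelG n.+1 subV) ('ker (rho n)).
rewrite (setIidPr kerV) -card_Vn => <-.
by rewrite -[X in X < _]mul1n ltn_pmul2r ?cardG_gt0 // cardG_gt1.
Qed.

Lemma not_efinite_of_level_growth V L0 (subV : subgrp V) :
  (forall n, L0 <= n -> #|level V n| < #|level V n.+1|) -> ~ efinite V.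
Proof.
move=> grow [m [f fV]].
have card_le n : #|level V n| <= m.
  apply: leq_trans (_ : #|[set f i n | i : 'I_m]| <= m).
    apply/subset_leq_card/subsetP => _ /levelP[x [Vx <-]].
    by have [i ->] := fV _ Vx; apply: imset_f.
  by apply: leq_trans (leq_imset_card _ _) _; rewrite card_ord.
have card_ge d : d < #|level V (L0 + d)|.
  elim: d => [|d IH]; first exact: (cardG_gt0 (levelG _ subV)).
  by rewrite addnS; apply: leq_trans (grow _ (leq_addr _ _)); rewrite ltnS.
by have := leq_ltn_trans (card_le (L0 + m)) (card_ge m); rewrite ltnn.
Qed.

End InverseLimit.

Section CriticalChain.
Context {S : invsys}.
Local Notation grp := (grp S).
Local Notation rho := (rho S).
Local Notation in_lim := (@in_lim S).
Local Notation e1 := (@e1 S).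

Variable A : forall n, {group grp n}.
Hypothesis A_normal : forall n, A n <| [set: grp n].
Variable N0 : nat.
Hypothesis critical :
  forall n, N0 <= n -> critical_pair [set: grp n.+1] (A n.+1) ('ker (rho n)).
Hypothesis PC_sub_ker : forall n, N0 <= n ->
  Pn (fun k => A k) n.+1 * 'C_[set: grp n.+1](Pn (fun k => A k) n.+1)
    \subset 'ker (rho n).

Local Notation P n := (rho n @* A n.+1).

Lemma P_normal n : P n <| [set: grp n].
Proof. by rewrite -(rho_onto S n); apply: morphim_normal. Qed.

Lemma P_sub_ker n : N0 <= n -> P n.+1 \subset 'ker (rho n).
Proof. by move/PC_sub_ker; apply: subset_trans; apply: mulG_subl. Qed.

Lemma cent_P_sub_ker n : N0 <= n -> 'C_[set: grp n.+1](P n.+1) \subset 'ker (rho n).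
Proof. by move/PC_sub_ker; apply: subset_trans; apply: mulG_subr. Qed.

Lemma ker_proper_A n : N0 <= n -> 'ker (rho n) \proper A n.+1.
Proof. by case/critical. Qed.

Lemma ker_rho_neq1 n : N0 <= n -> 'ker (rho n) != 1.
Proof.
move=> le_N0n; apply: contraTneq (ker_proper_A le_N0n) => ker1.
have P1 : P n.+1 :=: 1 by apply/trivgP; rewrite -ker1 P_sub_ker.
have := cent_P_sub_ker le_N0n; rewrite P1 cent1T setIid ker1 => /trivgP T1.
by rewrite proper1G negbK; apply/eqP/trivgP; rewrite -T1 subsetT.
Qed.

Lemma normal_meet_A_sub_ker n (X : {group grp n.+1}) : N0 <= n ->
  X <| [set: grp n.+1] -> ~~ (A n.+1 \subset X) -> X :&: A n.+1 \subset 'ker (rho n).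
Proof.
move=> le_N0n nX notAX; have [_ _ _ minA] := critical le_N0n.
apply: (minA (X :&: A n.+1)%G); first exact: normalI.
by rewrite properE subsetIr; apply: contra notAX => /subset_trans->; rewrite ?subsetIl.
Qed.

(* A normal subgroup X not containing A_{n+2} commutes with A_{n+2} modulo
   ker rho_{n+1}, so rho_{n+1}(X) centralises P_{n+1} and dies under rho_n. *)
Lemma morphim_rho2_normal_eq1 n (X : {group grp n.+2}) : N0 <= n ->
  X <| [set: grp n.+2] -> ~~ (A n.+2 \subset X) -> rho n @* (rho n.+1 @* X) = 1.
Proof.
move=> le_N0n nX notAX.
have XA_ker := normal_meet_A_sub_ker (leqW le_N0n) nX notAX.
have commXA : [~: X, A n.+2] \subset X :&: A n.+2.
  by rewrite commg_subI // subsetI subxx (subset_trans (subsetT _)) ?normal_norm.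
have centXP : [~: rho n.+1 @* X, P n.+1] = 1.
  rewrite /= -morphimR ?subsetT //; apply/trivgP; rewrite -(morphim_ker (rho n.+1)).
  exact/morphimS/(subset_trans commXA).
apply/trivgP; rewrite -(morphim_ker (rho n)).
apply/morphimS/(subset_trans _ (cent_P_sub_ker le_N0n)).
by rewrite subsetI subsetT; apply/commG1P.
Qed.

Lemma P_minimal_normal n (X : {group grp n.+1}) : N0 <= n ->
  X <| [set: grp n.+1] -> X \proper P n.+1 -> X :=: 1.
Proof.
move=> le_N0n nX ltXP; set Y := (rho n.+1 @*^-1 X)%G.
have nY : Y <| [set: grp n.+2].
  by rewrite -(morphpreT (rho n.+1)) morphpre_normal ?rho_onto ?subsetT.
have notAY : ~~ (A n.+2 \subset Y).
  by apply: contra (proper_subn ltXP); rewrite sub_morphim_pre ?subsetT.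
have YA_ker := normal_meet_A_sub_ker (leqW le_N0n) nY notAY.
apply/trivgP; rewrite -(setIidPr (proper_sub ltXP)) -morphim_setIpre.
by rewrite -(morphim_ker (rho n.+1)) morphimS // setIC.
Qed.

Lemma closed_normal_contains_ker_proj X : subgrp X -> eclosed X ->
  enormalizes in_lim X -> nontrivial X ->
  exists m, forall x, in_lim x -> x m = 1 -> X x.
Proof.
move=> subX closedX normX [h [Xh h_nt]]; have limX : esub X in_lim by case: subX.
have [j h_neq1_from] := in_lim_eventually_neq1 (limX _ Xh) h_nt.
have A_sub n : maxn N0 j <= n -> A n.+2 \subset level X n.+2.
  rewrite geq_max => /andP[le_N0n le_jn]; apply: contraT => notAX.
  have := morphim_rho2_normal_eq1 (X := levelG n.+2 subX) le_N0n
    (level_normal n.+2 limX normX) notAX.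
  rewrite /= !morphim_rho_level // => Xn1.
  have : h n \in level X n by apply/levelP; exists h.
  by rewrite Xn1 inE (negbTE (h_neq1_from n le_jn)).
exists (maxn N0 j).+1; apply: closed_contains_ker_proj => // -[|n] // le_n.
have le_N0n : N0 <= n.+1 := leqW (leq_trans (leq_maxl N0 j) le_n).
exact: subset_trans (proper_sub (ker_proper_A le_N0n)) (A_sub n le_n).
Qed.

Lemma open_not_efinite V k : subgrp V ->
  (forall x, in_lim x -> x k = 1 -> V x) -> ~ efinite V.
Proof.
move=> subV kerV; apply: (not_efinite_of_level_growth (L0 := maxn N0 k) subV) => n le_n.
apply: level_card_lt subV _ _.
  exact: ker_rho_sub_level kerV (leq_trans (leq_maxr _ _) le_n).
exact: ker_rho_neq1 (leq_trans (leq_maxl _ _) le_n).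
Qed.

Lemma Glim_subgrp : subgrp (Glim S).
Proof. by split=> //; [exact: in_lim1 | exact: in_limM | exact: in_limV]. Qed.

Lemma Glim_just_infinite : just_infinite (Glim S).
Proof.
split; first exact: (@open_not_efinite _ 0 Glim_subgrp).
move=> X subX closedX _ normX ntX.
have [m kerX] := closed_normal_contains_ker_proj subX closedX normX ntX.
exact: finite_index_of_ker_proj Glim_subgrp kerX.
Qed.

Lemma A_sub_level_ker_proj j k : N0 <= j -> k <= j ->
  A j.+2 \subset level (ker_proj k) j.+2.
Proof.
move=> le_N0j le_kj; apply/subsetP => a Aa; apply/levelP.
exists (thread a); split; last exact: thread_at.
split; first exact: thread_in_lim.
apply: (in_lim_eq1_le (thread_in_lim a) _ le_kj).
rewrite -(thread_in_lim a j) -(thread_in_lim a j.+1) thread_at.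
by apply/(kerP _ (in_setT _))/(subsetP (P_sub_ker le_N0j))/mem_morphim; rewrite ?in_setT.
Qed.

(* The image K of an open subgroup contains A_{j+2} hence P_{j+2}; if K were
   nilpotent, minimality of P_{j+2} would force [P_{j+2}, K] = 1, so that
   A_{j+2} <= K <= C(P_{j+2}) <= ker rho_{j+1}. *)
Lemma Glim_not_virtually_pronilpotent : ~ virtually_pronilpotent (Glim S).
Proof.
case=> H [[_ _ [k kerH]] proH].
pose j := maxn N0 k; have le_N0j : N0 <= j.+1 by rewrite leqW ?leq_maxl.
pose K := levelG j.+2 (@ker_proj_subgrp S k).
have nK : K <| [set: grp j.+2].
  by apply: level_normal; [move=> x [] | exact: ker_proj_normal].
have [Q [HQ nilQ]] := proH j.+2.
have nilK : nilpotent K.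
  apply: nilpotentS nilQ; apply/subsetP => _ /levelP[x [[limx xk] <-]].
  by apply/HQ; exists x; split=> //; apply: kerH.
have AK : A j.+2 \subset K by apply: A_sub_level_ker_proj; rewrite ?leq_maxl ?leq_maxr.
have PK : P j.+2 \subset K.
  by rewrite (subset_trans (P_sub_ker le_N0j)) // (subset_trans (proper_sub (ker_proper_A le_N0j))).
have PK1 : [~: P j.+2, K] = 1.
  have [-> | P_neq1] := eqVneq (P j.+2) 1; first exact: comm1G.
  have nPK : [~: P j.+2, K] <| [set: grp j.+2].
    by rewrite /normal subsetT normsR // (subset_trans (subsetT _)) ?normal_norm ?P_normal.
  apply: (P_minimal_normal (X := [~: P j.+2, K]%G) le_N0j nPK).
  apply: nil_comm_properl nilK PK P_neq1 _.
  by rewrite subsetI subxx (subset_trans (subsetT _)) ?normal_norm ?P_normal.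
have /negP[] := proper_subn (ker_proper_A le_N0j).
apply: subset_trans AK (subset_trans _ (cent_P_sub_ker le_N0j)).
by rewrite subsetI subsetT centsC; apply/commG1P.
Qed.

Definition commuting_conjugates_normal n : Prop :=
  forall U : {group grp n},
    (forall x y, U :^ x != U :^ y -> U :^ x \subset 'C(U :^ y)) ->
    A n \subset << \bigcup_(x in [set: grp n]) U :^ x >> ->
    U <| [set: grp n].

Definition condition_star : Prop :=
  forall m, exists n, m <= n /\ commuting_conjugates_normal n.

Section OpenSubgroup.
Variables (H N : epred S) (k : nat).
Hypothesis H_subgrp : subgrp H.
Hypothesis H_open : forall x, in_lim x -> x k = 1 -> H x.
Hypothesis N_subgrp : subgrp N.
Hypothesis N_closed : eclosed N.
Hypothesis N_normal : enormalizes H N.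
Hypothesis N_nontrivial : nontrivial N.

Definition Nk : epred S := fun x => N x /\ x k = 1.

Lemma Nk_in_lim x : Nk x -> in_lim x.
Proof. by case: N_subgrp => limN _ _ _ [/limN]. Qed.

Lemma Nk_subgrp : subgrp Nk.
Proof.
case: N_subgrp => limN N1 NM NV; split.
- by move=> x [/limN].
- by split.
- by move=> x y [Nx x1] [Ny y1]; split; [apply: NM | rewrite /emul x1 y1 mulg1].
- by move=> x [Nx x1]; split; [apply: NV | rewrite /einv x1 invg1].
Qed.

Lemma Nk_closed : eclosed Nk.
Proof.
move=> x limx approx; split; last by have [y [[_ y1] <-]] := approx k.
by apply: N_closed => // n; have [y [[Ny _] yx]] := approx n; exists y.
Qed.

Lemma Nk_conj u y : H u -> Nk y -> Nk (econj u y).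
Proof.
move=> Hu [Ny y1]; split; last by rewrite econj_at y1 mulg1 mulgV.
have Hu' : H (einv u) by case: H_subgrp => _ _ _; apply.
by have := N_normal Hu' Ny; rewrite -econjVE einvK.
Qed.

(* Conjugating into Nk only depends on the level-k coordinate of the
   conjugating element, since ker_proj k <= H. *)
Lemma Nk_conj_level g g' y : in_lim g -> in_lim g' -> g k = g' k -> in_lim y ->
  Nk (econj g y) -> Nk (econj g' y).
Proof.
move=> limg limg' gg' limy Nk_gy.
have -> : econj g' y = econj (emul g' (einv g)) (econj g y).
  by rewrite econj_comp; congr econj; apply: elt_ext => i; rewrite /emul /einv mulgKV.
apply: Nk_conj Nk_gy; apply: H_open; first by apply: in_limM => //; apply: in_limV.
by rewrite /emul /einv gg' mulgV.
Qed.

Lemma Nk_nontrivial : nontrivial Nk.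
Proof.
apply: NNPP => Nk_triv; case: N_nontrivial => h [Nh h_nt].
have limh : in_lim h by case: N_subgrp => limN _ _ _; apply: limN.
have [j h_neq1_from] := in_lim_eventually_neq1 limh h_nt.
pose n := maxn j (maxn N0 k).
have le_N0n : N0 <= n by rewrite !leq_max leqnn orbT.
have le_kn : k <= n by rewrite !leq_max leqnn !orbT.
suff : h n.+1 \in 'ker (rho n).
  by move/(kerP _ (in_setT _)); rewrite limh; apply/eqP/h_neq1_from/leq_maxl.
apply: subsetP (cent_P_sub_ker le_N0n) _ _; rewrite inE in_setT; apply/centP => p Pp.
have limy := thread_in_lim p.
have yk : thread p k = 1.
  apply: (in_lim_eq1_le limy _ le_kn); rewrite -limy thread_at.
  exact/(kerP _ (in_setT _))/(subsetP (P_sub_ker le_N0n)).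
have Nk_comm : Nk (ecomm h (thread p)).
  split; last by rewrite /ecomm yk commg1.
  rewrite ecommE; case: N_subgrp => _ _ NM NV; apply: NM; first exact: NV.
  by rewrite econjVE; apply: N_normal => //; apply: H_open.
have comm1 : eeq (ecomm h (thread p)) e1.
  by apply: NNPP => comm_nt; apply: Nk_triv; exists (ecomm h (thread p)).
by apply/commgP; rewrite -[p](thread_at p); apply/eqP/comm1.
Qed.

(* [meetNk T] is the intersection of the conjugates of Nk by the elements of
   T, a set of level-k representatives. *)
Definition meetNk (T : {set grp k}) : epred S :=
  fun y => in_lim y /\ forall s, s \in T -> Nk (econj (thread s) y).

Lemma meetNk_subgrp T : subgrp (meetNk T).
Proof.
have [_ Nk1 NkM NkV] := Nk_subgrp; split.
- by move=> x [].
- by split=> [|s _]; rewrite ?econjg1; [exact: in_lim1 | exact: Nk1].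
- move=> x y [limx Tx] [limy Ty]; split=> [|s Ts]; first exact: in_limM.
  by rewrite econj_mul; apply: NkM; [apply: Tx | apply: Ty].
- move=> x [limx Tx]; split=> [|s Ts]; first exact: in_limV.
  by rewrite econj_inv; apply/NkV/Tx.
Qed.

Lemma meetNk_closed T : eclosed (meetNk T).
Proof.
move=> x limx approx; split=> // s Ts.
apply: Nk_closed; first by apply: in_lim_econj => //; apply: thread_in_lim.
move=> n; have [y [[_ Ty] yx]] := approx n.
by exists (econj (thread s) y); split; [apply: Ty | rewrite !econj_at yx].
Qed.

Lemma meetNk_ker T y : T != set0 -> meetNk T y -> y k = 1.
Proof.
case/set0Pn=> s Ts [_ /(_ s Ts)[_]]; rewrite econj_at thread_at => sy1.
by apply: (mulgI s); rewrite mulg1 -(mulgKV s (s * y k)) sy1 mul1g.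
Qed.

Lemma meetNk_conj_ker T u y : in_lim u -> u k = 1 -> meetNk T y -> meetNk T (econj u y).
Proof.
move=> limu u1 [limy Ty]; split=> [|s Ts]; first exact: in_lim_econj.
rewrite econj_comp; apply: (Nk_conj_level (g := thread s)) (Ty s Ts) => //.
- exact: thread_in_lim.
- by apply: in_limM => //; apply: thread_in_lim.
- by rewrite /emul u1 mulg1.
Qed.

Lemma meetNk_conj T g y : in_lim g -> in_lim y ->
  meetNk T (econj g y) <-> meetNk (T :* g k) y.
Proof.
move=> limg limy; have limgy := in_lim_econj limg limy.
split=> -[_ Ty]; split=> // s.
  case/rcosetP=> t Tt ->; have := Ty t Tt; rewrite econj_comp.
  apply: Nk_conj_level => //; first by apply: in_limM => //; apply: thread_in_lim.
  - exact: thread_in_lim.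
  - by rewrite /emul !thread_at.
move=> Ts; rewrite econj_comp.
apply: (Nk_conj_level (g := thread (s * g k))) => //.
- exact: thread_in_lim.
- by apply: in_limM => //; apply: thread_in_lim.
- by rewrite /emul !thread_at.
- by apply: Ty; rewrite mem_rcoset mulgK.
Qed.

Lemma meetNkU T1 T2 y : meetNk (T1 :|: T2) y <-> meetNk T1 y /\ meetNk T2 y.
Proof.
split=> [[limy Ty] | [[limy T1y] [_ T2y]]].
  by split; split=> // s Ts; apply: Ty; rewrite inE Ts ?orbT.
by split=> // s; rewrite inE => /orP[]; [apply: T1y | apply: T2y].
Qed.

Lemma meetNk1_nontrivial : nontrivial (meetNk [set 1]).
Proof.
have [h [Nkh h_nt]] := Nk_nontrivial; have limh := Nk_in_lim Nkh.
exists h; split=> //; split=> // s /set1P->.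
apply: (Nk_conj_level (g := e1)) => //.
- exact: in_lim1.
- exact: thread_in_lim.
- by rewrite thread_at.
- by rewrite econj1.
Qed.

Lemma exists_max_meetNk_nontrivial : exists T0 : {set grp k},
  nontrivial (meetNk T0) /\ forall T, nontrivial (meetNk T) -> #|T| <= #|T0|.
Proof.
pose p n := classic_bool (exists T : {set grp k}, #|T| = n /\ nontrivial (meetNk T)).
have ex_p : exists n, p n.
  exists 1%N; apply/classic_boolP; exists [set 1].
  by rewrite cards1; split=> //; exact: meetNk1_nontrivial.
have ub_p n : p n -> n <= #|grp k| by case/classic_boolP=> T [<- _]; apply: max_card.
case: (ex_maxnP ex_p ub_p) => m /classic_boolP[T0 [card_T0 T0_nt]] max_m.
exists T0; split=> // T T_nt; rewrite card_T0; apply: max_m.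
by apply/classic_boolP; exists T.
Qed.

Section MaximalMeet.
Variable T0 : {set grp k}.
Hypothesis T0_nontrivial : nontrivial (meetNk T0).
Hypothesis T0_max : forall T, nontrivial (meetNk T) -> #|T| <= #|T0|.

Lemma T0_neq0 : T0 != set0.
Proof.
by apply: contraTneq (T0_max meetNk1_nontrivial) => ->; rewrite cards1 cards0.
Qed.

Lemma rcoset_T0_neq0 c : T0 :* c != set0.
Proof.
have [s Ts] := set0Pn _ T0_neq0; apply/set0Pn; exists (s * c).
by rewrite mem_rcoset mulgK.
Qed.

(* The commutator of elements of the intersections over two distinct
   translates of T0 lies in the intersection over their union, which is
   strictly larger than T0. *)
Lemma meetNk_translates_commute g h z1 z2 : in_lim g -> in_lim h ->
  T0 :* g k != T0 :* h k -> meetNk (T0 :* g k) z1 -> meetNk (T0 :* h k) z2 ->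
  eeq (ecomm z1 z2) e1.
Proof.
move=> limg limh neq_gh Tz1 Tz2.
have [[limz1 _] [limz2 _]] := (Tz1, Tz2).
have [_ _ TgM TgV] := meetNk_subgrp (T0 :* g k).
have [_ _ ThM ThV] := meetNk_subgrp (T0 :* h k).
have Tg_comm : meetNk (T0 :* g k) (ecomm z1 z2).
  rewrite ecommE; apply: TgM; first exact: TgV.
  apply: meetNk_conj_ker => //; first exact: in_limV.
  by rewrite /einv (meetNk_ker (rcoset_T0_neq0 _) Tz2) invg1.
have Th_comm : meetNk (T0 :* h k) (ecomm z1 z2).
  rewrite ecommEr; apply: ThM => //; apply: meetNk_conj_ker; first exact: in_limV.
    by rewrite /einv (meetNk_ker (rcoset_T0_neq0 _) Tz1) invg1.
  exact: ThV.
apply: NNPP => comm_nt.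
have : #|T0 :* g k :|: T0 :* h k| <= #|T0|.
  by apply: T0_max; exists (ecomm z1 z2); split=> //; apply/meetNkU.
apply/negP; rewrite -ltnNge -(card_rcoset _ (g k)) ltn_neqAle subset_leq_card ?subsetUl //.
rewrite andbT; apply: contra neq_gh => /eqP card_eq.
have U_eq : T0 :* g k == T0 :* g k :|: T0 :* h k.
  by rewrite eqEcard subsetUl -card_eq leqnn.
by rewrite eq_sym eqEcard !card_rcoset leqnn andbT (eqP U_eq) subsetUr.
Qed.

Lemma level_meetNk_conjg n (x : grp n) :
  level (meetNk T0) n :^ x = level (meetNk (T0 :* thread x k)) n.
Proof.
have limx := thread_in_lim x.
apply/setP => t; rewrite mem_conjg; apply/levelP/levelP => -[z [Tz zt]].
  have limz : in_lim z by case: Tz.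
  have limxz : in_lim (econj (einv (thread x)) z).
    by apply: in_lim_econj => //; apply: in_limV.
  exists (econj (einv (thread x)) z); split.
    by apply/(meetNk_conj _ limx limxz); rewrite econjKV.
  by rewrite econj_at zt /einv thread_at /conjg !invgK !mulgA mulVg mul1g mulgKV.
have limz : in_lim z by case: Tz.
exists (econj (thread x) z); split; first exact/meetNk_conj.
by rewrite econj_at zt thread_at /conjg invgK mulgA.
Qed.

Lemma level_meetNk_conjugates_commute n (x y : grp n) :
  level (meetNk T0) n :^ x != level (meetNk T0) n :^ y ->
  level (meetNk T0) n :^ x \subset 'C(level (meetNk T0) n :^ y).
Proof.
rewrite !level_meetNk_conjg => neq_xy.
have neq_T : T0 :* thread x k != T0 :* thread y k by apply: contra neq_xy => /eqP->.
apply/subsetP => _ /levelP[z1 [Tz1 <-]]; apply/centP => _ /levelP[z2 [Tz2 <-]].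
apply/commgP/eqP; apply: (meetNk_translates_commute _ _ neq_T) => //; exact: thread_in_lim.
Qed.

Lemma A_sub_conjugates_level j h : N0 <= j -> meetNk T0 h -> h j != 1 ->
  A j.+2 \subset << \bigcup_(x in [set: grp j.+2]) level (meetNk T0) j.+2 :^ x >>.
Proof.
move=> le_N0j Th hj_neq1; have limU : esub (meetNk T0) in_lim by move=> x [].
set U := level (meetNk T0) j.+2; set W := << _ >>; apply: contraT => notAW.
have nW : W <| [set: grp j.+2].
  rewrite /normal subsetT /W -class_supportEr.
  exact: subset_trans (class_support_norm _ _) (norm_gen _).
have UW : U \subset W by apply: sub_gen; rewrite -{1}[U]conjsg1; apply: bigcup_sup.
have W1 := morphim_rho2_normal_eq1 (X := [group of W]) le_N0j nW notAW.
have : h j \in rho j @* (rho j.+1 @* U).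
  by rewrite !morphim_rho_level //; apply/levelP; exists h.
by move/(subsetP (morphimS _ (morphimS _ UW))); rewrite W1 inE (negbTE hj_neq1).
Qed.

Hypothesis star : condition_star.

Lemma meetNk_T0_normal : enormalizes in_lim (meetNk T0).
Proof.
apply: (normalized_of_level_normal (meetNk_subgrp T0) (meetNk_closed (T := T0))) => m.
have [h [Th h_nt]] := T0_nontrivial; have limh : in_lim h by case: Th.
have [j h_neq1_from] := in_lim_eventually_neq1 limh h_nt.
have [[|[|n]] [le_Mn starn]] := star (maxn m (maxn N0 j)).+2; try by [].
have /and3P[le_mn le_N0n le_jn] : [&& m <= n, N0 <= n & j <= n] by rewrite -!geq_max.
exists n.+2; first by rewrite !leqW.
apply: (starn (levelG n.+2 (meetNk_subgrp T0))).
  exact: level_meetNk_conjugates_commute.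
exact: A_sub_conjugates_level le_N0n Th (h_neq1_from n le_jn).
Qed.

Lemma ker_proj_sub_N : exists m, forall x, in_lim x -> x m = 1 -> N x.
Proof.
have [m kerT] := closed_normal_contains_ker_proj (meetNk_subgrp T0)
  (meetNk_closed (T := T0)) meetNk_T0_normal T0_nontrivial.
exists m => x limx xm1; have [s Ts] := set0Pn _ T0_neq0.
have limsx : in_lim (econj (einv (thread s)) x).
  by apply: in_lim_econj => //; apply/in_limV/thread_in_lim.
have sx1 : econj (einv (thread s)) x m = 1 by rewrite econj_at xm1 mulg1 mulgV.
have [_ /(_ s Ts)] := kerT _ limsx sx1.
by rewrite econjKV => -[].
Qed.

End MaximalMeet.

Lemma N_finite_index : condition_star -> finite_index N H.
Proof.
move=> star; have [T0 [T0_nt T0_max]] := exists_max_meetNk_nontrivial.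
have [m kerN] := ker_proj_sub_N T0_nt T0_max star.
apply: finite_index_of_ker_proj H_subgrp _ => x Hx; apply: kerN.
by case: H_subgrp => limH _ _ _; apply: limH.
Qed.

End OpenSubgroup.

Lemma Glim_hereditarily_just_infinite :
  condition_star -> hereditarily_just_infinite (Glim S).
Proof.
move=> star; split=> [|H [subH _ [k kerH]]]; first exact: Glim_just_infinite.
split=> [|N subN closedN _ normN ntN]; first exact: open_not_efinite subH kerH.
exact: N_finite_index subH kerH subN closedN normN ntN star.
Qed.

End CriticalChain.

Theorem theorem5 (S : invsys) (A : forall n, {group grp S n})
  (hA : forall n, A n <| [set: grp S n])
  (hcrit : exists N, forall n, N <= n ->
     critical_pair [set: grp S n.+1] (A n.+1) ('ker (rho S n)) /\
     Pn (fun k => A k) n.+1 * 'C_[set: grp S n.+1](Pn (fun k => A k) n.+1)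
       \subset 'ker (rho S n)) :
  (just_infinite (Glim S) /\ ~ virtually_pronilpotent (Glim S)) /\
  ((forall N, exists n, N <= n /\
      forall U : {group grp S n},
        (forall x y, U :^ x != U :^ y -> U :^ x \subset 'C(U :^ y)) ->
        A n \subset << \bigcup_(x in [set: grp S n]) U :^ x >> ->
        U <| [set: grp S n]) ->
   hereditarily_just_infinite (Glim S)).
Proof.
have [N0 hN0] := hcrit.
have critical n (le_N0n : N0 <= n) := (hN0 n le_N0n).1.
have PC_sub_ker n (le_N0n : N0 <= n) := (hN0 n le_N0n).2.
split; first split.
- exact (Glim_just_infinite hA critical PC_sub_ker).
- exact (Glim_not_virtually_pronilpotent hA critical PC_sub_ker).
- exact (Glim_hereditarily_just_infinite hA critical PC_sub_ker).
Qed.
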